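(* Let $\mathbb C$ be a homological category with finite colimits, and let $w\colon W\to A$, $x\colon X\to A$, $y\colon Y\to A$ be morphisms in $\mathbb C$ with $w$ a monomorphism. If $m\colon (W+X)\times_W(W+Y)\to A$ is an internal multiplication $X\times Y\to A$ over $(W,w)$, then $m\circ\ker(\gamma_w)=0$.
   Context: A homological category is a regular pointed category in which the Split Short Five Lemma holds. Notation: $\iota_i$ are coproduct injections, $[a,b]$ copairing, $\langle a,b\rangle$ pairing, $1$, $0$ identity and zero morphisms. $(W+X)\times_W(W+Y)$ is the pullback of $[1,0]\colon W+X\to W$ and $[1,0]\colon W+Y\to W$, with projections $\pi_1,\pi_2$. An internal multiplication $X\times Y\to A$ over $(W,w)$ is a morphism $m\colon (W+X)\times_W(W+Y)\to A$ with $m\langle 1,\iota_1[1,0]\rangle=[w,x]$ and $m\langle \iota_1[1,0],1\rangle=[w,y]$. $A_3=A\times_{A/X}A\times_{A/Y}A$ is the limit of $A\xrightarrow{\mathsf{coker}(x)}A/X\xleftarrow{\mathsf{coker}(x)}A\xrightarrow{\mathsf{coker}(y)}A/Y\xleftarrow{\mathsf{coker}(y)}A$, and $\gamma_w=\langle [w,x]\pi_1,[w,0]\pi_1,[w,y]\pi_2\rangle\colon (W+X)\times_W(W+Y)\to A_3$. *)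

Set Implicit Arguments.
Unset Strict Implicit.

Record Category := {
  Ob :> Type;
  Hom : Ob -> Ob -> Type;
  idm : forall A, Hom A A;
  comp : forall A B C, Hom B C -> Hom A B -> Hom A C;
  comp_assoc : forall A B C D (h : Hom C D) (g : Hom B C) (f : Hom A B),
      comp h (comp g f) = comp (comp h g) f;
  comp_id_l : forall A B (f : Hom A B), comp (idm B) f = f;
  comp_id_r : forall A B (f : Hom A B), comp f (idm A) = f
}.

Arguments Hom {_} _ _.
Arguments idm {_} _.
Arguments comp {_ _ _ _} _ _.
Notation "g \o f" := (comp g f) (at level 40, left associativity).

Section Notions.
Context {C : Category}.

Definition IsMono {A B : C} (f : Hom A B) : Prop :=
  forall T (g h : Hom T A), f \o g = f \o h -> g = h.

Definition IsIso {A B : C} (f : Hom A B) : Prop :=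
  exists g : Hom B A, g \o f = idm A /\ f \o g = idm B.

Definition IsTerminal (T : C) : Prop :=
  forall A : C, exists f : Hom A T, forall g : Hom A T, g = f.
Definition IsInitial (I : C) : Prop :=
  forall A : C, exists f : Hom I A, forall g : Hom I A, g = f.
Definition IsZeroObj (Z : C) : Prop := IsInitial Z /\ IsTerminal Z.

Definition Pointed : Prop := exists Z : C, IsZeroObj Z.

Definition IsZeroMor {A B : C} (f : Hom A B) : Prop :=
  exists (Z : C) (g : Hom A Z) (h : Hom Z B), IsZeroObj Z /\ f = h \o g.

Definition IsProduct {A B P : C} (p1 : Hom P A) (p2 : Hom P B) : Prop :=
  forall T (f : Hom T A) (g : Hom T B),
    exists h : Hom T P, (p1 \o h = f /\ p2 \o h = g) /\
      forall h' : Hom T P, p1 \o h' = f -> p2 \o h' = g -> h' = h.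

Definition IsCoproduct {A B S : C} (i1 : Hom A S) (i2 : Hom B S) : Prop :=
  forall T (f : Hom A T) (g : Hom B T),
    exists h : Hom S T, (h \o i1 = f /\ h \o i2 = g) /\
      forall h' : Hom S T, h' \o i1 = f -> h' \o i2 = g -> h' = h.

Definition IsEqualizer {A B E : C} (f g : Hom A B) (e : Hom E A) : Prop :=
  f \o e = g \o e /\
  forall T (t : Hom T A), f \o t = g \o t ->
    exists u : Hom T E, e \o u = t /\ forall u', e \o u' = t -> u' = u.

Definition IsCoequalizer {A B Q : C} (f g : Hom A B) (q : Hom B Q) : Prop :=
  q \o f = q \o g /\
  forall T (t : Hom B T), t \o f = t \o g ->
    exists u : Hom Q T, u \o q = t /\ forall u', u' \o q = t -> u' = u.

Definition IsPullback {A B D P : C} (f : Hom A D) (g : Hom B D)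
    (p1 : Hom P A) (p2 : Hom P B) : Prop :=
  f \o p1 = g \o p2 /\
  forall T (a : Hom T A) (b : Hom T B), f \o a = g \o b ->
    exists h : Hom T P, (p1 \o h = a /\ p2 \o h = b) /\
      forall h' : Hom T P, p1 \o h' = a -> p2 \o h' = b -> h' = h.

Definition IsKernel {A B K : C} (f : Hom A B) (k : Hom K A) : Prop :=
  IsZeroMor (f \o k) /\
  forall T (t : Hom T A), IsZeroMor (f \o t) ->
    exists u : Hom T K, k \o u = t /\ forall u', k \o u' = t -> u' = u.

Definition IsCokernel {A B Q : C} (f : Hom A B) (q : Hom B Q) : Prop :=
  IsZeroMor (q \o f) /\
  forall T (t : Hom B T), IsZeroMor (t \o f) ->
    exists u : Hom Q T, u \o q = t /\ forall u', u' \o q = t -> u' = u.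

Definition HasFiniteLimits : Prop :=
  (exists T : C, IsTerminal T) /\
  (forall A B : C, exists (P : C) (p1 : Hom P A) (p2 : Hom P B), IsProduct p1 p2) /\
  (forall (A B : C) (f g : Hom A B), exists (E : C) (e : Hom E A), IsEqualizer f g e).

Definition HasFiniteColimits : Prop :=
  (exists I : C, IsInitial I) /\
  (forall A B : C, exists (S : C) (i1 : Hom A S) (i2 : Hom B S), IsCoproduct i1 i2) /\
  (forall (A B : C) (f g : Hom A B), exists (Q : C) (q : Hom B Q), IsCoequalizer f g q).

Definition IsRegularEpi {A B : C} (f : Hom A B) : Prop :=
  exists (R : C) (a b : Hom R A), IsCoequalizer a b f.

Definition Regular : Prop :=
  HasFiniteLimits /\
  (forall (A B R : C) (f : Hom A B) (a b : Hom R A), IsPullback f f a b ->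
     exists (Q : C) (q : Hom A Q), IsCoequalizer a b q) /\
  (forall (A B D P : C) (f : Hom A D) (g : Hom B D) (p1 : Hom P A) (p2 : Hom P B),
     IsRegularEpi f -> IsPullback f g p1 p2 -> IsRegularEpi p2).

Definition SplitShortFiveLemma : Prop :=
  forall (K A B K' A' B' : C)
    (k : Hom K A) (p : Hom A B) (s : Hom B A)
    (k' : Hom K' A') (p' : Hom A' B') (s' : Hom B' A')
    (u : Hom K K') (v : Hom A A') (w : Hom B B'),
    IsKernel p k -> p \o s = idm B ->
    IsKernel p' k' -> p' \o s' = idm B' ->
    v \o k = k' \o u -> p' \o v = w \o p -> v \o s = s' \o w ->
    IsIso u -> IsIso w -> IsIso v.

Definition Homological : Prop := Pointed /\ Regular /\ SplitShortFiveLemma.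

End Notions.


(* If [gamma_w k = 0] then [w [1,0] pi1 k = [w,0] pi1 k = 0], so, [w] being
   mono, [k] lies over [0] in [W].  Hence [k] factors through the diagonal of
   [K x K] followed by [G = pi1 k x pi2 k : K x K -> P], and along the two
   product injections [G] restricts to [<1, iota_1 [1,0]> pi1 k] and
   [<iota_1 [1,0], 1> pi2 k], on which [m] is [[w,x] pi1 k] and [[w,y] pi2 k],
   both killed by [gamma_w].  In a homological category the injections of a
   product are jointly epic (Split Short Five Lemma applied to an equalizer),
   so [m G = 0] and therefore [m k = 0]. *)

Section ZeroMorphisms.
Context {C : Category}.

Lemma comp_zero {A B D : C} (g : Hom B D) (f : Hom A B) :
  IsZeroMor f -> IsZeroMor (g \o f).
Proof.
  intros [Z [a [b [HZ ->]]]]. exists Z, a, (g \o b). split; [exact HZ | apply comp_assoc].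
Qed.

Lemma zero_comp {A B D : C} (g : Hom B D) (f : Hom A B) :
  IsZeroMor g -> IsZeroMor (g \o f).
Proof.
  intros [Z [a [b [HZ ->]]]]. exists Z, (a \o f), b.
  split; [exact HZ | symmetry; apply comp_assoc].
Qed.

Lemma zero_mor_unique {A B : C} (f g : Hom A B) :
  IsZeroMor f -> IsZeroMor g -> f = g.
Proof.
  intros [Z1 [a1 [b1 [[I1 _] ->]]]] [Z2 [a2 [b2 [[_ T2] ->]]]].
  destruct (I1 Z2) as [r Hr]. destruct (I1 B) as [s Hs]. destruct (T2 A) as [t Ht].
  assert (Eb : b1 = b2 \o r) by (rewrite (Hs b1); symmetry; apply Hs).
  assert (Ea : a2 = r \o a1) by (rewrite (Ht a2); symmetry; apply Ht).
  rewrite Eb, Ea. symmetry. apply comp_assoc.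
Qed.

Lemma zero_mor_exists (HPt : Pointed (C := C)) (A B : C) :
  exists z : Hom A B, IsZeroMor z.
Proof.
  destruct HPt as [Z [HI HT]]. destruct (HI B) as [b _]. destruct (HT A) as [a _].
  exists (b \o a), Z, a, b. split; [split; assumption | reflexivity].
Qed.

Lemma mono_reflects_zero (HPt : Pointed (C := C)) {T W A : C}
    {w : Hom W A} {f : Hom T W} :
  IsMono w -> IsZeroMor (w \o f) -> IsZeroMor f.
Proof.
  intros Hw Hwf. destruct (zero_mor_exists HPt T W) as [z Hz].
  replace f with z; [exact Hz |].
  apply Hw, zero_mor_unique; [apply comp_zero; exact Hz | exact Hwf].
Qed.

End ZeroMorphisms.

Section UniversalProperties.
Context {C : Category}.

Lemma coproduct_ext {A B S T : C} {i1 : Hom A S} {i2 : Hom B S} {h h' : Hom S T} :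
  IsCoproduct i1 i2 -> h \o i1 = h' \o i1 -> h \o i2 = h' \o i2 -> h = h'.
Proof.
  intros HS E1 E2. destruct (HS T (h \o i1) (h \o i2)) as [u [_ Hu]].
  transitivity u; [apply Hu | symmetry; apply Hu]; auto.
Qed.

Lemma product_ext {A B P T : C} {p1 : Hom P A} {p2 : Hom P B} {h h' : Hom T P} :
  IsProduct p1 p2 -> p1 \o h = p1 \o h' -> p2 \o h = p2 \o h' -> h = h'.
Proof.
  intros HP E1 E2. destruct (HP T (p1 \o h) (p2 \o h)) as [u [_ Hu]].
  transitivity u; [apply Hu | symmetry; apply Hu]; auto.
Qed.

Lemma pullback_ext {A B D P T : C} {f : Hom A D} {g : Hom B D}
    {p1 : Hom P A} {p2 : Hom P B} {h h' : Hom T P} :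
  IsPullback f g p1 p2 -> p1 \o h = p1 \o h' -> p2 \o h = p2 \o h' -> h = h'.
Proof.
  intros [Hsq HP] E1 E2. destruct (HP T (p1 \o h) (p2 \o h)) as [u [_ Hu]].
  { rewrite !comp_assoc, Hsq. reflexivity. }
  transitivity u; [apply Hu | symmetry; apply Hu]; auto.
Qed.

Lemma equalizer_mono {A B E : C} {f g : Hom A B} {e : Hom E A} :
  IsEqualizer f g e -> IsMono e.
Proof.
  intros [He Hu] T a b Hab. destruct (Hu T (e \o a)) as [u [_ Hu']].
  { rewrite !comp_assoc, He. reflexivity. }
  rewrite (Hu' a eq_refl), (Hu' b (eq_sym Hab)). reflexivity.
Qed.

Lemma iso_idm (A : C) : IsIso (idm A).
Proof. exists (idm A). split; apply comp_id_l. Qed.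

Lemma iso_cancel_r {A B D : C} {e : Hom A B} {f g : Hom B D} :
  IsIso e -> f \o e = g \o e -> f = g.
Proof.
  intros [e' [_ He']] Hfg.
  rewrite <- (comp_id_r f), <- (comp_id_r g), <- He', !comp_assoc, Hfg. reflexivity.
Qed.

Lemma product_injection_kernel {K L KL : C} {p1 : Hom KL K} {p2 : Hom KL L}
    {i1 : Hom K KL} :
  IsProduct p1 p2 -> p1 \o i1 = idm K -> IsZeroMor (p2 \o i1) -> IsKernel p2 i1.
Proof.
  intros Hp Hi1 Hi2. split; [exact Hi2 |].
  intros T t Ht. exists (p1 \o t). split.
  - apply (product_ext Hp).
    + rewrite comp_assoc, Hi1, comp_id_l. reflexivity.
    + rewrite comp_assoc. apply zero_mor_unique; [apply zero_comp |]; assumption.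
  - intros u Hu. rewrite <- Hu, comp_assoc, Hi1, comp_id_l. reflexivity.
Qed.

Lemma kernel_through_mono {A B K E : C} {p : Hom A B} {k : Hom K A}
    {e : Hom E A} {a : Hom K E} :
  IsKernel p k -> IsMono e -> e \o a = k -> IsKernel (p \o e) a.
Proof.
  intros [Hpk Hk] He Ha. split; [rewrite <- comp_assoc, Ha; exact Hpk |].
  intros T t Ht. destruct (Hk T (e \o t)) as [u [Hu Huniq]].
  { rewrite comp_assoc. exact Ht. }
  exists u. split.
  - apply He. rewrite comp_assoc, Ha. exact Hu.
  - intros u' Hu'. apply Huniq. rewrite <- Ha, <- comp_assoc, Hu'. reflexivity.
Qed.

(* The equalizer of [f] and [g] contains both injections, and the Split Short
   Five Lemma compares its split extension over [L] with that of [K x L]. *)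
Lemma product_injections_jointly_epic
    (HL : HasFiniteLimits (C := C)) (HS : SplitShortFiveLemma (C := C))
    {K L KL B : C} {p1 : Hom KL K} {p2 : Hom KL L} {i1 : Hom K KL} {i2 : Hom L KL}
    (Hp : IsProduct p1 p2)
    (Hi11 : p1 \o i1 = idm K) (Hi12 : IsZeroMor (p2 \o i1))
    (Hi22 : p2 \o i2 = idm L) (f g : Hom KL B) :
  f \o i1 = g \o i1 -> f \o i2 = g \o i2 -> f = g.
Proof.
  intros E1 E2.
  destruct HL as [_ [_ Heq]]. destruct (Heq _ _ f g) as [E [e He]].
  destruct (proj2 He _ i1 E1) as [a [Ha _]].
  destruct (proj2 He _ i2 E2) as [b [Hb _]].
  pose proof (equalizer_mono He) as Hmono.
  pose proof (product_injection_kernel Hp Hi11 Hi12) as Hk.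
  assert (Hiso : IsIso e).
  { apply (HS K E L K KL L a (p2 \o e) b i1 p2 i2 (idm K) e (idm L)).
    - exact (kernel_through_mono Hk Hmono Ha).
    - rewrite <- comp_assoc, Hb. exact Hi22.
    - exact Hk.
    - exact Hi22.
    - rewrite comp_id_r. exact Ha.
    - rewrite comp_id_l. reflexivity.
    - rewrite comp_id_r. exact Hb.
    - apply iso_idm.
    - apply iso_idm. }
  exact (iso_cancel_r Hiso (proj1 He)).
Qed.

End UniversalProperties.

Section MorphismsOutOfPullback.
Context {C : Category}.
Hypotheses (HPt : Pointed (C := C)) (HL : HasFiniteLimits (C := C))
  (HS : SplitShortFiveLemma (C := C)).
Context {W SX SY P : C} {rX : Hom SX W} {rY : Hom SY W}
  {pi1 : Hom P SX} {pi2 : Hom P SY}.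
Hypothesis HP : IsPullback rX rY pi1 pi2.
Context {iW : Hom W SX} {jW : Hom W SY} {eX : Hom SX P} {eY : Hom SY P}.
Hypotheses (HeX1 : pi1 \o eX = idm SX) (HeX2 : pi2 \o eX = jW \o rX)
  (HeY1 : pi1 \o eY = iW \o rY) (HeY2 : pi2 \o eY = idm SY).

Lemma zero_of_zero_on_axes {A T : C} (m : Hom P A) (h : Hom T P) :
  IsZeroMor (rX \o (pi1 \o h)) ->
  IsZeroMor (m \o eX \o (pi1 \o h)) -> IsZeroMor (m \o eY \o (pi2 \o h)) ->
  IsZeroMor (m \o h).
Proof.
  intros Hu HmX HmY.
  set (u := pi1 \o h) in *. set (v := pi2 \o h).
  assert (Hv : IsZeroMor (rY \o v)).
  { unfold v. rewrite comp_assoc, <- (proj1 HP), <- comp_assoc. exact Hu. }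
  destruct (proj1 (proj2 HL) T T) as [TT [p1 [p2 Hp]]].
  destruct (zero_mor_exists HPt T T) as [z Hz].
  destruct (Hp T (idm T) z) as [i1 [[Hi11 Hi12] _]].
  destruct (Hp T z (idm T)) as [i2 [[Hi21 Hi22] _]].
  destruct (Hp T (idm T) (idm T)) as [d [[Hd1 Hd2] _]].
  destruct (proj2 HP TT (u \o p1) (v \o p2)) as [G [[HG1 HG2] _]].
  { rewrite !comp_assoc. apply zero_mor_unique; apply zero_comp; assumption. }
  assert (EGd : G \o d = h).
  { apply (pullback_ext HP).
    - rewrite comp_assoc, HG1, <- comp_assoc, Hd1, comp_id_r. reflexivity.
    - rewrite comp_assoc, HG2, <- comp_assoc, Hd2, comp_id_r. reflexivity. }
  assert (EG1 : G \o i1 = eX \o u).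
  { apply (pullback_ext HP).
    - rewrite !comp_assoc, HG1, HeX1, <- comp_assoc, Hi11, comp_id_r, comp_id_l.
      reflexivity.
    - rewrite !comp_assoc, HG2, HeX2, <- !comp_assoc, Hi12.
      apply zero_mor_unique; apply comp_zero; assumption. }
  assert (EG2 : G \o i2 = eY \o v).
  { apply (pullback_ext HP).
    - rewrite !comp_assoc, HG1, HeY1, <- !comp_assoc, Hi21.
      apply zero_mor_unique; apply comp_zero; assumption.
    - rewrite !comp_assoc, HG2, HeY2, <- comp_assoc, Hi22, comp_id_r, comp_id_l.
      reflexivity. }
  assert (Hi12z : IsZeroMor (p2 \o i1)) by (rewrite Hi12; exact Hz).
  destruct (zero_mor_exists HPt TT A) as [zA HzA].
  assert (HmG : m \o G = zA).
  { apply (product_injections_jointly_epic HL HS Hp Hi11 Hi12z Hi22).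
    - rewrite <- comp_assoc, EG1, comp_assoc.
      apply zero_mor_unique; [exact HmX | apply zero_comp; exact HzA].
    - rewrite <- comp_assoc, EG2, comp_assoc.
      apply zero_mor_unique; [exact HmY | apply zero_comp; exact HzA]. }
  rewrite <- EGd, comp_assoc, HmG. apply zero_comp. exact HzA.
Qed.

End MorphismsOutOfPullback.

Theorem lemma1p4 (C : Category)
  (HC : Homological (C := C)) (Hcolim : HasFiniteColimits (C := C))
  (W X Y A : C) (w : Hom W A) (x : Hom X A) (y : Hom Y A)
  (Hw : IsMono w)
  (* W + X and W + Y *)
  (SX : C) (iW : Hom W SX) (iX : Hom X SX) (HSX : IsCoproduct iW iX)
  (SY : C) (jW : Hom W SY) (jY : Hom Y SY) (HSY : IsCoproduct jW jY)
  (* [1,0] : W + X -> W and [1,0] : W + Y -> W *)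
  (rX : Hom SX W) (HrX1 : rX \o iW = idm W) (HrX2 : IsZeroMor (rX \o iX))
  (rY : Hom SY W) (HrY1 : rY \o jW = idm W) (HrY2 : IsZeroMor (rY \o jY))
  (* (W+X) x_W (W+Y) *)
  (P : C) (pi1 : Hom P SX) (pi2 : Hom P SY) (HP : IsPullback rX rY pi1 pi2)
  (* [w,x], [w,0] : W+X -> A and [w,y] : W+Y -> A *)
  (wx : Hom SX A) (Hwx1 : wx \o iW = w) (Hwx2 : wx \o iX = x)
  (w0 : Hom SX A) (Hw01 : w0 \o iW = w) (Hw02 : IsZeroMor (w0 \o iX))
  (wy : Hom SY A) (Hwy1 : wy \o jW = w) (Hwy2 : wy \o jY = y)
  (* <1, iota_1 [1,0]> : W+X -> P and <iota_1 [1,0], 1> : W+Y -> P *)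
  (eX : Hom SX P) (HeX1 : pi1 \o eX = idm SX) (HeX2 : pi2 \o eX = jW \o rX)
  (eY : Hom SY P) (HeY1 : pi1 \o eY = iW \o rY) (HeY2 : pi2 \o eY = idm SY)
  (* internal multiplication m *)
  (m : Hom P A) (Hm1 : m \o eX = wx) (Hm2 : m \o eY = wy)
  (* cokernels A -> A/X, A -> A/Y *)
  (QX : C) (cx : Hom A QX) (Hcx : IsCokernel x cx)
  (QY : C) (cy : Hom A QY) (Hcy : IsCokernel y cy)
  (* A_3 = A x_{A/X} A x_{A/Y} A, limit of A -> A/X <- A -> A/Y <- A *)
  (A3 : C) (l1 l2 l3 : Hom A3 A)
  (HA3c : cx \o l1 = cx \o l2 /\ cy \o l2 = cy \o l3)
  (HA3u : forall (T : C) (a1 a2 a3 : Hom T A),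
      cx \o a1 = cx \o a2 -> cy \o a2 = cy \o a3 ->
      exists h : Hom T A3, (l1 \o h = a1 /\ l2 \o h = a2 /\ l3 \o h = a3) /\
        forall h' : Hom T A3, l1 \o h' = a1 -> l2 \o h' = a2 -> l3 \o h' = a3 -> h' = h)
  (* gamma_w = < [w,x] pi1, [w,0] pi1, [w,y] pi2 > *)
  (gam : Hom P A3)
  (Hg1 : l1 \o gam = wx \o pi1) (Hg2 : l2 \o gam = w0 \o pi1)
  (Hg3 : l3 \o gam = wy \o pi2)
  (* ker(gamma_w) *)
  (K : C) (k : Hom K P) (Hk : IsKernel gam k) :
  IsZeroMor (m \o k).
Proof.
  destruct HC as [HPt [[HL _] HS]].
  pose proof (proj1 Hk) as Hgk.
  assert (Ew0 : w0 = w \o rX).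
  { apply (coproduct_ext HSX).
    - rewrite Hw01, <- comp_assoc, HrX1, comp_id_r. reflexivity.
    - rewrite <- comp_assoc.
      apply zero_mor_unique; [exact Hw02 | apply comp_zero; exact HrX2]. }
  apply (zero_of_zero_on_axes HPt HL HS HP HeX1 HeX2 HeY1 HeY2).
  - apply (mono_reflects_zero HPt Hw).
    rewrite !comp_assoc, <- Ew0, <- Hg2, <- comp_assoc. apply comp_zero. exact Hgk.
  - rewrite Hm1, comp_assoc, <- Hg1, <- comp_assoc. apply comp_zero. exact Hgk.
  - rewrite Hm2, comp_assoc, <- Hg3, <- comp_assoc. apply comp_zero. exact Hgk.
Qed.
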